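(* Let $q$ be a prime power, $m$ a positive integer, and $n=q^m-1$. Let $x,y$ be integers with $1\le x,y<q^{\lceil m/2\rceil}+1$, $x\not\equiv0\pmod q$, $y\not\equiv 0\pmod q$, and $x\ne y$. Then the $q$-ary cyclotomic cosets $C_x=\{xq^\ell\bmod n\mid\ell\in\mathbf{Z}\}$ and $C_y$ are distinct (hence disjoint). *)

From mathcomp Require Import all_boot.

Set Implicit Arguments.
Unset Strict Implicit.
Unset Printing Implicit Defensive.

Definition prime_power (q : nat) : Prop :=
  exists p k : nat, prime p /\ 0 < k /\ q = p ^ k.

(* Exponents l range over nat; since
   gcd(q, n) = 1 when n = q^m - 1, q^m = 1 (mod n), so negative
   exponents give nothing new. *)
Definition cyclotomic_coset (q n x : nat) : nat -> Prop :=
  fun z => exists l : nat, z = (x * q ^ l) %% n.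

From mathcomp Require Import all_boot.
From mathcomp Require Import zify.

Set Implicit Arguments.
Unset Strict Implicit.
Unset Printing Implicit Defensive.

(* If C_x and C_y meet, then y = x q^j (mod q^m - 1) for some 0 <= j < m.
   With P = q^(m-j) and Q = q^j, multiplying by Q rotates the m base-q digits
   of x = a P + b (b < P) cyclically, so y = a + b Q.  As q divides neither x
   nor y, both digit blocks are nonzero, whence y >= q^j and x >= q^(m-j).  For
   x, y < q^ceil(m/2) this forces j < ceil(m/2) and m - j < ceil(m/2), which is
   impossible; and j = 0 gives x = y since 0 < x, y <= q^m - 1. *)

Lemma prime_power_gt1 (q : nat) : prime_power q -> 1 < q.
Proof. by move=> [p [k [p_prime [k_gt0 ->]]]]; rewrite -(exp1n k) ltn_exp2r // prime_gt1. Qed.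

Lemma expn_mod_pred (q m : nat) : 0 < q -> q ^ m = 1 %[mod q ^ m - 1].
Proof.
move=> q_gt0; have qm_gt0 := expn_gt0 q m; rewrite q_gt0 in qm_gt0.
by rewrite -{1}(subnK qm_gt0) modnDl.
Qed.

Lemma expn_mod_exp (q m e : nat) : 0 < q ->
  q ^ e = q ^ (e %% m) %[mod q ^ m - 1].
Proof.
move=> q_gt0; rewrite {1}(divn_eq e m) expnD (mulnC (e %/ m)) expnM.
by rewrite -modnMml -(modnXm (e %/ m)) (expn_mod_pred m q_gt0) modnXm exp1n modnMml mul1n.
Qed.

Lemma cyclotomic_coset_meet (q m x y z : nat) : 0 < q -> 0 < m ->
  let n := q ^ m - 1 in
  cyclotomic_coset q n x z -> cyclotomic_coset q n y z ->
  exists2 j, j < m & y = x * q ^ j %[mod n].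
Proof.
move=> q_gt0 m_gt0 /= [l ->] [k yz].
exists ((l + k * m.-1) %% m); first by rewrite ltn_mod.
have y_rot : y = y * q ^ k * q ^ (k * m.-1) %[mod q ^ m - 1].
  rewrite -mulnA -expnD -mulnS prednK // (mulnC k) expnM.
  by rewrite -modnMmr -modnXm (expn_mod_pred m q_gt0) modnXm exp1n modnMmr muln1.
rewrite y_rot -modnMml -yz modnMml -mulnA -expnD.
by rewrite -modnMmr expn_mod_exp // modnMmr.
Qed.

Lemma rotate_digits_mod (P Q x : nat) : 0 < P * Q ->
  x * Q = x %/ P + x %% P * Q %[mod P * Q - 1].
Proof.
move=> PQ_gt0; set n := P * Q - 1.
have PQ_eq : P * Q = n + 1 by rewrite /n subnK.
by rewrite {1}(divn_eq x P) mulnDl -mulnA PQ_eq mulnDr muln1 -addnA modnMDl.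
Qed.

Lemma rotate_digits_le (P Q x : nat) : x < P * Q ->
  x %/ P + x %% P * Q <= P * Q - 1.
Proof.
move=> x_lt; have P_gt0 : 0 < P by case: P x_lt => [|//]; rewrite mul0n.
have a_lt : x %/ P < Q by rewrite ltn_divLR // mulnC.
have b_lt : x %% P < P by rewrite ltn_mod.
nia.
Qed.

Lemma no_small_nontrivial_rotation (q m c j x y : nat) : 1 < q ->
  0 < j < m -> c.*2 <= m.+1 -> x < q ^ c -> y < q ^ c ->
  ~~ (q %| x) -> ~~ (q %| y) -> y = x * q ^ j %[mod q ^ m - 1] -> False.
Proof.
move=> q_gt1 /andP[j_gt0 j_lt] c_le x_lt y_lt q_x q_y y_rot.
have q_gt0 := ltnW q_gt1.
set P := q ^ (m - j); set Q := q ^ j.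
have PQ_eq : q ^ m = P * Q by rewrite -expnD subnK // ltnW.
have qc_lt : q ^ c < q ^ m by rewrite ltn_exp2l //; lia.
have x_ltPQ : x < P * Q by rewrite -PQ_eq (ltn_trans x_lt).
have y_ltn : y < P * Q - 1 by rewrite -PQ_eq; lia.
have y_eq : y = (x %/ P + x %% P * Q) %% (P * Q - 1).
  rewrite -(modn_small y_ltn) -PQ_eq y_rot PQ_eq rotate_digits_mod //.
  by rewrite -PQ_eq expn_gt0 q_gt0.
have rot_le := rotate_digits_le x_ltPQ.
set a := x %/ P in y_eq rot_le *; set b := x %% P in y_eq rot_le *.
have {rot_le y_eq} y_def : y = a + b * Q.
  move: rot_le; rewrite leq_eqVlt => /orP[/eqP rot_n | rot_lt].
    by move: q_y; rewrite y_eq rot_n modnn dvdn0.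
  by rewrite y_eq modn_small.
have q_P : q %| P by rewrite dvdn_exp // subn_gt0.
have q_Q : q %| Q by rewrite dvdn_exp.
have b_gt0 : 0 < b.
  rewrite lt0n; apply: contra q_x => /eqP b0.
  by rewrite (divn_eq x P) -/b b0 addn0 dvdn_mull.
have a_gt0 : 0 < a.
  by rewrite lt0n; apply: contra q_y => /eqP a0; rewrite y_def a0 add0n dvdn_mull.
have j_lt_c : j < c.
  rewrite -(ltn_exp2l _ _ q_gt1) -/Q (leq_ltn_trans _ y_lt) // y_def.
  by rewrite (leq_trans _ (leq_addl _ _)) // leq_pmull.
have mj_lt_c : m - j < c.
  rewrite -(ltn_exp2l _ _ q_gt1) -/P (leq_ltn_trans _ x_lt) // {1}(divn_eq x P) -/a.
  by rewrite (leq_trans _ (leq_addr _ _)) // leq_pmull.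
by clear -j_lt_c mj_lt_c c_le; lia.
Qed.

Lemma pos_le_mod_inj (n x y : nat) : 0 < x <= n -> 0 < y <= n ->
  x = y %[mod n] -> x = y.
Proof.
wlog le_xy : x y / x <= y.
  move=> wlog_le x_rng y_rng xy_mod.
  by case: (leqP x y) => [/wlog_le|/ltnW/wlog_le] -> //.
move=> /andP[x_gt0 _] /andP[_ y_le] /esym/eqP; rewrite eqn_mod_dvd //.
have [yx0 _ | yx_gt0] := posnP (y - x); first lia.
by rewrite gtnNdvd //; lia.
Qed.

Lemma ndvd_ltn_expn (q c x : nat) : 0 < c -> x < q ^ c + 1 -> ~~ (q %| x) ->
  x < q ^ c.
Proof.
move=> c_gt0; rewrite addn1 ltnS leq_eqVlt => /orP[/eqP ->|//].
by rewrite dvdn_exp.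
Qed.

Theorem mainTheorem5 (q m x y : nat) :
  prime_power q -> 0 < m ->
  let n := q ^ m - 1 in
  1 <= x -> x < q ^ ((m.+1)./2) + 1 ->
  1 <= y -> y < q ^ ((m.+1)./2) + 1 ->
  ~~ (q %| x) -> ~~ (q %| y) -> x != y ->
  ~ (forall z, cyclotomic_coset q n x z <-> cyclotomic_coset q n y z) /\
  (forall z, cyclotomic_coset q n x z -> ~ cyclotomic_coset q n y z).
Proof.
move=> /prime_power_gt1 q_gt1 m_gt0 n x_gt0 x_le y_gt0 y_le q_x q_y x_ne_y.
set c := (m.+1)./2.
have c_gt0 : 0 < c by rewrite /c; case: (m) m_gt0.
have c_le : c.*2 <= m.+1 by rewrite -{1}(odd_double_half m.+1) leq_addl.
have x_lt : x < q ^ c by apply: ndvd_ltn_expn.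
have y_lt : y < q ^ c by apply: ndvd_ltn_expn.
have qc_le : q ^ c <= q ^ m by rewrite leq_exp2l //; lia.
have small_le_n w : w < q ^ c -> w <= n.
  by move=> w_lt; rewrite /n; clear -w_lt qc_le; lia.
have disj z : cyclotomic_coset q n x z -> ~ cyclotomic_coset q n y z.
  move=> Cx Cy; have [j j_lt y_rot] := cyclotomic_coset_meet (ltnW q_gt1) m_gt0 Cx Cy.
  have [j0 | j_gt0] := posnP j.
    move: y_rot; rewrite j0 muln1 => /esym y_mod; case/eqP: x_ne_y.
    by apply: (pos_le_mod_inj _ _ y_mod); rewrite ?x_gt0 ?y_gt0 small_le_n.
  apply: (no_small_nontrivial_rotation q_gt1 _ c_le x_lt y_lt q_x q_y y_rot).
  by rewrite j_gt0.
split=> // same_coset; apply: (disj (x %% n)); first by exists 0; rewrite muln1.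
by apply/same_coset; exists 0; rewrite muln1.
Qed.
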